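(* Let $\delta,\alpha\geq0$, $\theta\in[0,\alpha]$, $\sigma\in\mathbb{R}$, $\varepsilon\in(0,1)$, and let $E_1(t,\xi)=\frac12|\xi|^{2\delta+\sigma}|\widehat{v}_t(t,\xi)|^2+\frac12|\xi|^{2\alpha+\sigma}|\widehat{v}(t,\xi)|^2$. (i) If $(v_0,v_1)\in H^{\alpha+\frac\sigma2}(\mathbb{R}^n)\times H^{\delta+\frac\sigma2}(\mathbb{R}^n)$ and $\delta\leq\theta\leq\alpha$, then there is a constant $c>0$ such that $$\int_{|\xi|\geq\varepsilon}E_1(t,\xi)\,d\xi\lesssim\left\{\|v_1\|^2_{H^{\delta+\frac\sigma2}}+\|v_0\|^2_{H^{\alpha+\frac\sigma2}}\right\}e^{-ct},\quad\forall t\geq0.$$ (ii) If $(v_0,v_1)\in H^s(\mathbb{R}^n)\times H^r(\mathbb{R}^n)$, $\beta>0$ and $\theta<\delta$, with $s=\alpha+\frac{\delta-\theta}{\beta}+\frac\sigma2$ and $r=\delta+\frac{\delta-\theta}{\beta}+\frac\sigma2$, then there is $C=C(\beta)>0$ such that $$\int_{|\xi|\geq\varepsilon}E_1(t,\xi)\,d\xi\leq C\left\{\|v_1\|^2_{H^r}+\|v_0\|^2_{H^s}\right\}(1+t)^{-\frac1\beta},\quad\forall t\geq0.$$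
   Context: $\widehat{v}(t,\xi)$ is the solution of $(1+|\xi|^{2\delta})\widehat{v}_{tt}+|\xi|^{2\theta}\widehat{v}_t+|\xi|^{2\alpha}\widehat{v}=0$, $\widehat{v}(0)=\widehat{v}_0$, $\widehat{v}_t(0)=\widehat{v}_1$, the Fourier transform in $x$ of the solution of $v_{tt}+(-\Delta)^\delta v_{tt}+(-\Delta)^\alpha v+(-\Delta)^\theta v_t=0$, $v(0)=v_0$, $v_t(0)=v_1$. $\lesssim$ means $\leq C\cdot$ with $C$ independent of $t$ and data. *)

From HB Require Import structures.
From mathcomp Require Import all_boot all_order all_algebra.
From mathcomp Require Import all_classical all_reals all_analysis.
Set Implicit Arguments. Unset Strict Implicit. Unset Printing Implicit Defensive.
Import Order.TTheory GRing.Theory Num.Theory.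
Import numFieldNormedType.Exports.
Local Open Scope ring_scope.

(* Points of R^n are n-tuples of reals (n.-tuple R carries the product
   sigma-algebra from MathComp-Analysis, so measurability is expressible). *)

Definition enorm2 (R : realType) (n : nat) (xi : n.-tuple R) : R :=
  \sum_(i < n) (tnth xi i) ^+ 2.
Definition enorm (R : realType) (n : nat) (xi : n.-tuple R) : R :=
  Num.sqrt (enorm2 xi).

(* Lebesgue integral over R^n of a nonnegative function, realised as the
   iterated one-dimensional Lebesgue integral (equal to the Lebesgue
   integral w.r.t. the n-dimensional Lebesgue measure by Tonelli for
   nonnegative measurable integrands). *)
Fixpoint intRn (R : realType) (n : nat) : (n.-tuple R -> \bar R) -> \bar R :=
  match n with
  | 0 => fun f => f [tuple]
  | k.+1 => fun f =>
      (\int[@lebesgue_measure R]_x intRn (fun y : k.-tuple R => f (cons_tuple x y)))%E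
  end.

(* Squared H^s norm of a tempered distribution given through its Fourier
   transform, the complex-valued function xi |-> fre xi + i fim xi:
   ||f||_{H^s}^2 = \int_{R^n} (1+|xi|^2)^s |\hat f(xi)|^2 dxi. *)
Definition Hs_norm2 (R : realType) (n : nat) (s : R)
    (fre fim : n.-tuple R -> R) : \bar R :=
  intRn (fun xi => ((1 + enorm2 xi) `^ s * (fre xi ^+ 2 + fim xi ^+ 2))%:E).

Definition in_Hs (R : realType) (n : nat) (s : R)
    (fre fim : n.-tuple R -> R) : Prop :=
  measurable_fun setT fre /\ measurable_fun setT fim /\
  (Hs_norm2 s fre fim < +oo)%E.

Definition solves_ode (R : realType) (n : nat) (delta alpha theta : R)
    (xi : n.-tuple R) (f : R -> R) (a b : R) : Prop :=
  (forall t, derivable f t 1) /\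
  (forall t, derivable (derive1 f) t 1) /\
  f 0 = a /\ derive1 f 0 = b /\
  forall t, (1 + enorm xi `^ (2 * delta)) * derive1 (derive1 f) t
            + enorm xi `^ (2 * theta) * derive1 f t
            + enorm xi `^ (2 * alpha) * f t = 0.

(* E_1(t,xi) for vhat = ure + i uim *)
Definition E1 (R : realType) (n : nat) (delta alpha sigma : R)
    (ure uim : R -> n.-tuple R -> R) (t : R) (xi : n.-tuple R) : R :=
  2^-1 * enorm xi `^ (2 * delta + sigma) *
    (derive1 (fun s => ure s xi) t ^+ 2 + derive1 (fun s => uim s xi) t ^+ 2)
  + 2^-1 * enorm xi `^ (2 * alpha + sigma) * (ure t xi ^+ 2 + uim t xi ^+ 2).

Definition E1_high (R : realType) (n : nat) (delta alpha sigma eps : R)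
    (ure uim : R -> n.-tuple R -> R) (t : R) : \bar R :=
  intRn (fun xi => if eps <= enorm xi then (E1 delta alpha sigma ure uim t xi)%:E
                   else 0%E).

From HB Require Import structures.
From mathcomp Require Import all_boot all_order all_algebra.
From mathcomp Require Import all_classical all_reals all_analysis.
From mathcomp Require Import measurable_realfun lebesgue_measure lebesgue_integral.
From mathcomp Require Import lra ring.
Set Implicit Arguments. Unset Strict Implicit. Unset Printing Implicit Defensive.
Import Order.TTheory GRing.Theory Num.Theory.
Import numFieldNormedType.Exports.
Local Open Scope ring_scope.

(** The Fourier transform turns the equation into the damped oscillators
    [a f'' + b f' + k f = 0], with [a = 1 + r^delta], [b = r^theta],
    [k = r^alpha] and [r = |xi|^2], one for the real and one for the imaginary
    part of [vhat].  Whenever [2 nu a <= b] and [2 nu b <= k], the Lyapunov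
    functional [a f'^2 + k f^2 + nu a f f'] is equivalent to the energy
    [a f'^2 + k f^2] and decays like [exp (- nu t / 2)].  On [|xi| >= eps],
    if [delta <= theta] a constant [nu] is admissible, which gives exponential
    decay.  If [theta < delta] the best rate is [nu ~ r^(theta - delta)], which
    degenerates at high frequency; the bound
    [exp (- c r^(theta - delta) t) <= K (1 + t)^(-1/beta) r^((delta - theta)/beta)]
    trades it for polynomial decay at the cost of [(delta - theta)/beta] more
    derivatives on the data.  On [r >= eps^2] the weights [r^s] are comparable
    to [(1 + r)^s], and integrating the resulting pointwise bounds in [xi]
    gives the Sobolev norms. *)

Section integral_le.
Local Open Scope ereal_scope.
Context d (T : measurableType d) (R : realType) (mu : {measure set T -> \bar R}).

(* No measurability is required: the solution of the equation is not assumed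
   to be measurable in [xi]. *)
Lemma ge0_le_integralT (f g : T -> \bar R) :
  (forall x, 0 <= f x) -> (forall x, f x <= g x) ->
  \int[mu]_x f x <= \int[mu]_x g x.
Proof.
move=> f0 fg; have g0 x : 0 <= g x := le_trans (f0 x) (fg x).
rewrite !ge0_integralTE//; apply: ereal_sup_le => _ [h hf <-].
by exists h => // x; exact: le_trans (hf x) (fg x).
Qed.

End integral_le.

Section iterated_integral.
Local Open Scope ereal_scope.
Variable R : realType.

Lemma intRn_ge0 (k : nat) (f : k.-tuple R -> \bar R) :
  (forall y, 0 <= f y) -> 0 <= intRn f.
Proof.
elim: k f => [|k IH] f f0 /=; first exact: f0.
by apply: integral_ge0 => x _; exact: IH.
Qed.

Lemma ge0_le_intRn (k : nat) (f g : k.-tuple R -> \bar R) :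
  (forall y, 0 <= f y) -> (forall y, f y <= g y) -> intRn f <= intRn g.
Proof.
elim: k f g => [|k IH] f g f0 fg /=; first exact: fg.
apply: ge0_le_integralT => x; first exact: intRn_ge0.
exact: IH.
Qed.

Lemma measurable_fun_intRn (k : nat) d (X : measurableType d)
    (F : X -> k.-tuple R -> \bar R) :
  measurable_fun setT (fun p : X * k.-tuple R => F p.1 p.2) ->
  (forall x y, 0 <= F x y) ->
  measurable_fun setT (fun x => intRn (F x)).
Proof.
elim: k d X F => [|k IH] d X F mF F0 /=.
  exact: measurableT_comp mF
    (measurable_fun_pair (@measurable_id _ X setT) (measurable_cst [tuple])).
pose G (p : X * measurableTypeR R) (y : k.-tuple R) := F p.1 (cons_tuple p.2 y).
have mG : measurable_fun setT (fun q : (X * measurableTypeR R) * k.-tuple R => G q.1 q.2).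
  have mc : measurable_fun setT
      (fun q : (X * measurableTypeR R) * k.-tuple R => (q.1.1, cons_tuple q.1.2 q.2)).
    apply: measurable_fun_pair => /=.
      exact: measurableT_comp measurable_fst measurable_fst.
    exact: measurable_cons (measurableT_comp measurable_snd measurable_fst)
      measurable_snd.
  exact: measurableT_comp mF mc.
have := @measurable_fun_fubini_tonelli_F _ _ _ _ _ _ (fun p => intRn (G p))
  (IH _ _ G mG (fun _ _ => F0 _ _)) (fun p => @intRn_ge0 k (G p) (fun _ => F0 _ _)).
by rewrite /fubini_F /=; apply.
Qed.

Lemma measurable_fun_intRn_cons (k : nat) (f : k.+1.-tuple R -> \bar R) :
  measurable_fun setT f -> (forall y, 0 <= f y) ->
  measurable_fun setT (fun x : R => intRn (fun y : k.-tuple R => f (cons_tuple x y))).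
Proof.
move=> mf f0.
apply: (@measurable_fun_intRn k _ _ (fun x y => f (cons_tuple x y))) => //.
exact: measurableT_comp mf (measurable_cons measurable_fst measurable_snd).
Qed.

Lemma measurable_fun_cons_section (k : nat) (x : R) (f : k.+1.-tuple R -> \bar R) :
  measurable_fun setT f -> measurable_fun setT (fun y : k.-tuple R => f (cons_tuple x y)).
Proof.
move=> mf; apply: (measurableT_comp mf).
by have := @measurable_cons _ _ _ _ (fun=> x) k id (measurable_cst x)
  (@measurable_id _ _ setT).
Qed.

Lemma ge0_intRnD (k : nat) (f g : k.-tuple R -> \bar R) :
  measurable_fun setT f -> measurable_fun setT g ->
  (forall y, 0 <= f y) -> (forall y, 0 <= g y) ->
  intRn (fun y => f y + g y) = intRn f + intRn g.
Proof.
elim: k f g => [|k IH] f g mf mg f0 g0 //=.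
rewrite -ge0_integralD//; last 4 first.
- by move=> x _; exact: intRn_ge0.
- exact: measurable_fun_intRn_cons.
- by move=> x _; exact: intRn_ge0.
- exact: measurable_fun_intRn_cons.
by apply: eq_integral => x _; apply: IH => //; exact: measurable_fun_cons_section.
Qed.

Lemma ge0_intRnZl (k : nat) (c : \bar R) (f : k.-tuple R -> \bar R) :
  0 <= c -> measurable_fun setT f -> (forall y, 0 <= f y) ->
  intRn (fun y => c * f y) = c * intRn f.
Proof.
elim: k f => [|k IH] f c0 mf f0 //=.
rewrite -ge0_integralZl//; last 2 first.
- exact: measurable_fun_intRn_cons.
- by move=> x _; exact: intRn_ge0.
by apply: eq_integral => x _; apply: IH => //; exact: measurable_fun_cons_section.
Qed.

End iterated_integral.

Section gronwall.
Local Open Scope classical_set_scope.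
Variable R : realType.

Lemma gronwall_expR (L L' : R -> R) (c : R) :
  (forall t : R, is_derive t (1 : R) L (L' t)) -> (forall t, L' t <= - c * L t) ->
  forall t, 0 <= t -> L t <= L 0 * expR (- (c * t)).
Proof.
move=> dL hL t t0.
pose E s := expR (c * s).
have dE (s : R) : is_derive s (1 : R) E (c * E s).
  have dcs : is_derive s (1 : R) (c \*: id) c.
    by apply: is_derive_eq; rewrite /GRing.scale /= mulr1.
  by apply: is_derive_eq (is_derive1_comp (is_derive_expR (c * s)) dcs) _; rewrite mulrC.
pose g s := L s * E s.
have dg (s : R) : is_derive s (1 : R) g (L s * (c * E s) + E s * L' s).
  rewrite (_ : g = L * E)//; apply: is_derive_eq (is_deriveM (dL s) (dE s)) _.
  by rewrite /GRing.scale /= mulrC [E s * _]mulrC.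
have g'_le0 s : derive1 g s <= 0.
  rewrite derive1E (@derive_val _ _ _ _ _ _ _ (dg s)).
  have Ep : 0 < E s := expR_gt0 _.
  have := hL s; nra.
have gcont : {within `[0, t], continuous g}.
  apply: continuous_subspaceT => s.
  by apply: differentiable_continuous; apply/derivable1_diffP; case: (dg s).
have := @ler0_derive1_le_cc _ g 0 t (fun s _ => @ex_derive _ _ _ _ _ _ _ (dg s))
  (fun s _ => g'_le0 s) gcont t 0.
rewrite !in_itv /= lexx t0 /= lexx => /(_ isT isT isT).
rewrite /g /E mulr0 expR0 mulr1 => gt_le.
have -> : L t = L t * expR (c * t) * expR (- (c * t)).
  by rewrite -mulrA -expRD subrr expR0 mulr1.
by rewrite ler_wpM2r // expR_ge0.
Qed.

End gronwall.

Section lyapunov_functional.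
Variable R : realFieldType.

Lemma lyapunov_dissipation (a b k nu x y z : R) :
  0 < a -> 0 < b -> 0 < k -> 0 < nu -> 2 * nu * a <= b -> 2 * nu * b <= k ->
  a * z + b * y + k * x = 0 ->
  2 * a * y * z + 2 * k * x * y + nu * a * (y ^+ 2 + x * z)
  <= - (nu / 2) * (a * y ^+ 2 + k * x ^+ 2 + nu * a * (x * y)).
Proof.
move=> a_gt0 b_gt0 k_gt0 nu_gt0 nu_a nu_b ode.
have -> : 2 * a * y * z + 2 * k * x * y + nu * a * (y ^+ 2 + x * z)
    = 2 * y * (a * z) + 2 * k * x * y + nu * (x * (a * z)) + nu * a * y * y by ring.
have -> : a * z = - (b * y) - k * x by lra.
clear ode.
(* The difference of the two sides is a nonnegative combination of these. *)
have T1 : 0 <= (b / 2) * (y + nu * x) ^+ 2.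
  by rewrite mulr_ge0 ?sqr_ge0 // divr_ge0 // ltW.
have T2 : 0 <= (nu * a / 4) * (y - nu * x) ^+ 2.
  by rewrite mulr_ge0 ?sqr_ge0 // divr_ge0 // mulr_ge0 // ltW.
have H1 : 0 <= (b - 2 * nu * a) * y ^+ 2 by rewrite mulr_ge0 ?sqr_ge0 // subr_ge0.
have H2 : 0 <= nu * (k - 2 * nu * b) * x ^+ 2.
  by rewrite mulr_ge0 ?sqr_ge0 // mulr_ge0 ?subr_ge0 // ltW.
have H3 : 0 <= nu * nu * (b - 2 * nu * a) * x ^+ 2.
  by rewrite mulr_ge0 ?sqr_ge0 // mulr_ge0 ?subr_ge0 // mulr_ge0 // ltW.
have H4 : 0 <= b * y ^+ 2 by rewrite mulr_ge0 ?sqr_ge0 // ltW.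
have H5 : 0 <= nu * nu * b * x ^+ 2.
  by rewrite mulr_ge0 ?sqr_ge0 // mulr_ge0 ?mulr_ge0 // ltW.
nra.
Qed.

Lemma lyapunov_energy_equiv (a b k nu x y : R) :
  0 < a -> 0 < b -> 0 < k -> 0 < nu -> 2 * nu * a <= b -> 2 * nu * b <= k ->
  3/4 * (a * y ^+ 2 + k * x ^+ 2) <= a * y ^+ 2 + k * x ^+ 2 + nu * a * (x * y) <=
  5/4 * (a * y ^+ 2 + k * x ^+ 2).
Proof.
move=> a_gt0 b_gt0 k_gt0 nu_gt0 nu_a nu_b.
have nu_k : 4 * nu * nu * a <= k.
  have : 2 * nu * (2 * nu * a) <= 2 * nu * b by rewrite ler_pM2l ?mulr_gt0.
  lra.
(* [a (a y^2 + k x^2) / 4 +- nu a^2 x y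
    = (a y +- 2 nu a x)^2 / 4 + a (k - 4 nu^2 a) x^2 / 4] *)
have S1 : 0 <= (a * y + 2 * nu * a * x) ^+ 2 by exact: sqr_ge0.
have S2 : 0 <= (a * y - 2 * nu * a * x) ^+ 2 by exact: sqr_ge0.
have S3 : 0 <= a * (k - 4 * nu * nu * a) * x ^+ 2.
  by rewrite mulr_ge0 ?sqr_ge0 // mulr_ge0 ?subr_ge0 // ltW.
apply/andP; split.
- suff : 0 <= a * (a * y ^+ 2 / 4 + k * x ^+ 2 / 4 + nu * a * (x * y)).
    by rewrite pmulr_rge0 //; lra.
  nra.
- suff : 0 <= a * (a * y ^+ 2 / 4 + k * x ^+ 2 / 4 - nu * a * (x * y)).
    by rewrite pmulr_rge0 //; lra.
  nra.
Qed.

End lyapunov_functional.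

Definition damped_ode (R : realType) (a b k : R) (f : R -> R) : Prop :=
  [/\ forall t, derivable f t 1, forall t, derivable (derive1 f) t 1 &
      forall t, a * derive1 (derive1 f) t + b * derive1 f t + k * f t = 0].

Definition ode_energy (R : realType) (a k : R) (f : R -> R) (t : R) : R :=
  a * derive1 f t ^+ 2 + k * f t ^+ 2.

Section damped_ode_decay.
Variable R : realType.

Lemma ode_energy_ge0 (a k : R) f t : 0 <= a -> 0 <= k -> 0 <= ode_energy a k f t.
Proof. by move=> a0 k0; rewrite addr_ge0 // mulr_ge0 // sqr_ge0. Qed.

Lemma ode_energy_decay (a b k nu : R) (f : R -> R) :
  0 < a -> 0 < b -> 0 < k -> 0 < nu -> 2 * nu * a <= b -> 2 * nu * b <= k ->
  damped_ode a b k f -> forall t, 0 <= t ->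
  ode_energy a k f t <= 2 * ode_energy a k f 0 * expR (- (nu / 2 * t)).
Proof.
move=> a0 b0 k0 nu0 nu_a nu_b [df ddf ode] t t0.
set f' := derive1 f; set f'' := derive1 f'.
have Df (s : R) : is_derive s (1 : R) f (f' s).
  by rewrite /f' derive1E; exact: derivableP.
have Df' (s : R) : is_derive s (1 : R) f' (f'' s).
  by rewrite /f'' derive1E; exact: derivableP.
pose L := a \*: f' ^+ 2 + k \*: f ^+ 2 + (nu * a) \*: (f * f').
have LE s : L s = a * f' s ^+ 2 + k * f s ^+ 2 + nu * a * (f s * f' s) by [].
pose L' s := 2 * a * f' s * f'' s + 2 * k * f s * f' s
  + nu * a * (f' s ^+ 2 + f s * f'' s).
have DL (s : R) : is_derive s (1 : R) L (L' s).
  apply: is_derive_eq (is_deriveD (is_deriveD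
    (is_deriveZ a (is_deriveX 2 (Df' s))) (is_deriveZ k (is_deriveX 2 (Df s))))
    (is_deriveZ (nu * a) (is_deriveM (Df s) (Df' s)))) _.
  by rewrite /L' /GRing.scale /=; ring.
have L'_le s : L' s <= - (nu / 2) * L s.
  by rewrite LE; exact: lyapunov_dissipation a0 b0 k0 nu0 nu_a nu_b (ode s).
have decay := gronwall_expR DL L'_le t0.
have /andP[Lt _] := lyapunov_energy_equiv (f t) (f' t) a0 b0 k0 nu0 nu_a nu_b.
have /andP[_ L0] := lyapunov_energy_equiv (f 0) (f' 0) a0 b0 k0 nu0 nu_a nu_b.
have X0 := expR_ge0 (- (nu / 2 * t)).
have := ler_wpM2r X0 L0; have := mulr_ge0 (ode_energy_ge0 f 0 (ltW a0) (ltW k0)) X0.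
rewrite !LE /ode_energy -/f' in decay *; lra.
Qed.

End damped_ode_decay.

Section real_powers.
Variable R : realType.
Implicit Types (e r p x y : R).

Lemma ge0_ler_powR_base p x y : 0 <= p -> 0 <= x -> x <= y -> x `^ p <= y `^ p.
Proof.
move=> p0 x0 xy; apply: (ge0_ler_powR p0) => //; rewrite nnegrE.
exact: le_trans xy.
Qed.

Lemma powR_le1 r p : 0 <= p -> 0 <= r -> r <= 1 -> r `^ p <= 1.
Proof. by move=> p0 r0 r1; have := ge0_ler_powR_base p0 r0 r1; rewrite powR1. Qed.

Lemma le0_ger_powR_base p x y : p <= 0 -> 0 < x -> x <= y -> y `^ p <= x `^ p.
Proof.
move=> p_le0 x0 xy; have y0 := lt_le_trans x0 xy.
have [q q0 ->] : exists2 q, 0 <= q & p = - q by exists (- p); rewrite ?opprK; lra.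
rewrite !powRN lef_pV2 ?posrE ?powR_gt0 //.
exact: ge0_ler_powR_base q0 (ltW x0) xy.
Qed.

Lemma powR_le_shift e p : 0 < e ->
  exists2 W, 0 < W & forall r, e <= r -> r `^ p <= W * (1 + r) `^ p.
Proof.
move=> e0; have q0 : 0 < e / (1 + e) by rewrite divr_gt0 //; lra.
exists (1 + (e / (1 + e)) `^ p); first by rewrite ltr_pwDl ?powR_ge0.
move=> r er; have r0 : 0 < r := lt_le_trans e0 er.
have -> : r `^ p = (r / (1 + r)) `^ p * (1 + r) `^ p.
  rewrite -powRM; last 2 first.
  - by apply: divr_ge0; lra.
  - lra.
  by congr (_ `^ _); field; lra.
rewrite ler_wpM2r ?powR_ge0 //.
have qr : e / (1 + e) <= r / (1 + r).
  rewrite ler_pdivrMr; last lra.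
  rewrite mulrAC ler_pdivlMr; last lra.
  nra.
have r1 : r / (1 + r) <= 1 by rewrite ler_pdivrMr; lra.
have := powR_ge0 (e / (1 + e)) p.
case: (lerP 0 p) => p0.
  by have := powR_le1 p0 (ltW (lt_le_trans q0 qr)) r1; lra.
by have := le0_ger_powR_base (ltW p0) q0 qr; lra.
Qed.

Lemma one_add_powR_le e r d : 0 < e -> e <= r -> 0 <= d ->
  1 + r `^ d <= (1 + e `^ (- d)) * r `^ d.
Proof.
move=> e0 er d0; have ed : 0 < e `^ d := powR_gt0 _ e0.
suff : 1 <= e `^ (- d) * r `^ d by lra.
rewrite powRN -(ler_pM2l ed) mulrA mulfV ?gt_eqF // mul1r mulr1.
exact: ge0_ler_powR_base d0 (ltW e0) er.
Qed.

End real_powers.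

Section weights_and_rates.
Variable R : realType.

Lemma energy_weight_le (e delta alpha s : R) : 0 < e -> 0 <= delta ->
  exists2 W, 0 < W & forall r x y, e <= r -> 0 <= x -> 0 <= y ->
    r `^ s * ((1 + r `^ delta) * x + r `^ alpha * y)
    <= W * ((1 + r) `^ (delta + s) * x + (1 + r) `^ (alpha + s) * y).
Proof.
move=> e0 d0.
have [W1 W1_gt0 hW1] := powR_le_shift (delta + s) e0.
have [W0 W0_gt0 hW0] := powR_le_shift (alpha + s) e0.
have ed0 : 0 < 1 + e `^ (- delta) by rewrite ltr_pwDl ?powR_ge0.
exists ((1 + e `^ (- delta)) * W1 + W0); first by rewrite addr_gt0 ?mulr_gt0.
move=> r x y er x0 y0; have r0 : 0 < r := lt_le_trans e0 er.
have rD u v : r `^ (u + v) = r `^ u * r `^ v by rewrite powRD // (gt_eqF r0) implybT.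
have Hx : r `^ s * (1 + r `^ delta)
    <= ((1 + e `^ (- delta)) * W1 + W0) * (1 + r) `^ (delta + s).
  apply: le_trans (_ : (1 + e `^ (- delta)) * (W1 * (1 + r) `^ (delta + s)) <= _).
    rewrite mulrC (le_trans (ler_wpM2r (powR_ge0 _ _) (one_add_powR_le e0 er d0))) //.
    by rewrite -mulrA -rD ler_wpM2l ?hW1 // ltW.
  by rewrite mulrA ler_wpM2r ?powR_ge0 // lerDl ltW.
have Hy : r `^ s * r `^ alpha <= ((1 + e `^ (- delta)) * W1 + W0) * (1 + r) `^ (alpha + s).
  rewrite -rD addrC; apply: le_trans (hW0 _ er) _.
  by rewrite ler_wpM2r ?powR_ge0 // lerDr mulr_ge0 ?ltW.
rewrite mulrDr [X in _ <= X]mulrDr !mulrA.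
by apply: lerD; apply: ler_wpM2r.
Qed.

Lemma expRN_le_powR (p y : R) : 0 < p -> 0 <= y ->
  expR (- y) <= (1 + y / p) `^ (- p).
Proof.
move=> p0 y0; have yp0 : 0 <= y / p by rewrite divr_ge0 // ltW.
have -> : expR (- y) = expR (- (y / p)) `^ p.
  by rewrite -expRM; congr expR; field; rewrite gt_eqF.
rewrite -[X in _ <= _ `^ X]mulN1r powRrM.
apply: ge0_ler_powR_base; [exact: ltW | exact: expR_ge0 |].
rewrite powR_inv1 ?expRN ?lef_pV2 ?posrE ?expR_gt0 ?expR_ge1Dx //; lra.
Qed.

Lemma expR_le_powR_decay (c p x0 : R) : 0 < c -> 0 < p -> 0 < x0 ->
  exists2 K, 0 < K & forall x t, 0 < x -> x <= x0 -> 0 <= t ->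
    expR (- (c * x * t)) <= K * (1 + t) `^ (- p) * x `^ (- p).
Proof.
move=> c0 p0 x0_gt0; set c' := c / p; have c'0 : 0 < c' by rewrite divr_gt0.
have d0 : 0 < 1 + c' * x0 by have := mulr_gt0 c'0 x0_gt0; lra.
set m := c' / (1 + c' * x0); have m0 : 0 < m by rewrite divr_gt0.
exists (m `^ (- p)); first exact: powR_gt0.
move=> x t x_gt0 x_le t0.
have y0 : 0 <= c * x * t by rewrite !mulr_ge0 // ltW.
apply: le_trans (expRN_le_powR p0 y0) _.
have mx1 : m * x <= 1.
  rewrite /m mulrAC ler_pdivrMr // mul1r.
  by have := ler_wpM2l (ltW c'0) x_le; lra.
have mc' : m <= c'.
  rewrite /m ler_pdivrMr //; have := mulr_gt0 c'0 (mulr_gt0 c'0 x0_gt0); lra.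
have lin : m * (1 + t) * x <= 1 + c * x * t / p.
  have : m * x * t <= c' * x * t by rewrite !ler_wpM2r // ltW.
  rewrite (_ : c * x * t / p = c' * x * t); last by rewrite /c'; field; rewrite gt_eqF.
  have -> : m * (1 + t) * x = m * x + m * x * t by ring.
  lra.
have t1 : 0 < 1 + t by lra.
have mtx0 : 0 < m * (1 + t) * x := mulr_gt0 (mulr_gt0 m0 t1) x_gt0.
have p_le0 : - p <= 0 by rewrite oppr_le0 ltW.
apply: le_trans (le0_ger_powR_base p_le0 mtx0 lin) _.
have [m_ge0 t_ge0 x_ge0] := And3 (ltW m0) (ltW t1) (ltW x_gt0).
by rewrite (powRM _ (mulr_ge0 m_ge0 t_ge0) x_ge0) (powRM _ m_ge0 t_ge0).
Qed.

End weights_and_rates.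

Section frequency_decay.
Variable R : realType.
Implicit Types (e r delta alpha theta : R).

Lemma one_add_powR_le_powR e r delta theta : 0 < e -> e <= 1 -> e <= r ->
  0 <= delta -> delta <= theta -> e `^ theta * (1 + r `^ delta) <= 2 * r `^ theta.
Proof.
move=> e0 e1 er d0 dt; have r0 := lt_le_trans e0 er; have t0 := le_trans d0 dt.
have et1 : e `^ theta <= 1 by rewrite powR_le1 // ltW.
have et0 : 0 < e `^ theta := powR_gt0 _ e0.
have [r1|r1] := lerP 1 r.
  have rdt : r `^ delta <= r `^ theta by exact: ler_powR.
  have : 1 <= r `^ theta by have := ler_powR r1 t0; rewrite powRr0.
  nra.
have : r `^ delta <= 1 by rewrite powR_le1 // ltW.
have : e `^ theta <= r `^ theta by exact: ge0_ler_powR_base t0 (ltW e0) er.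
nra.
Qed.

Lemma powR_le_one_add_powR r delta theta : 0 <= r -> 0 <= theta -> theta <= delta ->
  r `^ theta <= 1 + r `^ delta.
Proof.
move=> r0 t0 td; have := powR_ge0 r delta; have := powR_ge0 r theta.
have [r1|r1] := lerP 1 r.
  by have := ler_powR r1 td; lra.
by have := powR_le1 t0 r0 (ltW r1); lra.
Qed.

Lemma ode_energy_exp_decay e delta alpha theta : 0 < e -> e <= 1 ->
  0 <= delta -> delta <= theta -> theta <= alpha ->
  exists2 c, 0 < c & forall r f t, e <= r ->
    damped_ode (1 + r `^ delta) (r `^ theta) (r `^ alpha) f -> 0 <= t ->
    ode_energy (1 + r `^ delta) (r `^ alpha) f t
    <= 2 * expR (- (c * t)) * ode_energy (1 + r `^ delta) (r `^ alpha) f 0.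
Proof.
move=> e0 e1 d0 dt ta; have t0 := le_trans d0 dt.
set nu := e `^ alpha / 4; have nu0 : 0 < nu by rewrite divr_gt0 ?powR_gt0.
exists (nu / 2); first by rewrite divr_gt0.
move=> r f t er ode t_ge0; have r0 := lt_le_trans e0 er.
have eat : e `^ alpha <= e `^ theta by apply: ger_powR => //; rewrite e0.
have ea : e `^ alpha <= e `^ (alpha - theta) by apply: ger_powR; rewrite ?e0 //; lra.
have eat1 : e `^ (alpha - theta) <= r `^ (alpha - theta).
  by apply: ge0_ler_powR_base => //; [lra | exact: ltW].
have rt0 : 0 < r `^ theta := powR_gt0 _ r0.
have a0 : 0 < 1 + r `^ delta by have := powR_ge0 r delta; lra.
have nu_a : 2 * nu * (1 + r `^ delta) <= r `^ theta.
  have := one_add_powR_le_powR e0 e1 er d0 dt.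
  by have := ltW a0; rewrite /nu; nra.
have nu_b : 2 * nu * r `^ theta <= r `^ alpha.
  have -> : r `^ alpha = r `^ (alpha - theta) * r `^ theta.
    by rewrite -powRD ?(gt_eqF r0) ?implybT // subrK.
  have : e `^ alpha / 2 <= r `^ (alpha - theta) by have := powR_ge0 e alpha; lra.
  by move/(ler_wpM2r (ltW rt0)); rewrite /nu; lra.
rewrite mulrAC.
exact: (ode_energy_decay a0 rt0 (powR_gt0 alpha r0) nu0 nu_a nu_b ode t_ge0).
Qed.

Lemma ode_energy_poly_decay e delta alpha theta p : 0 < e -> e <= 1 ->
  0 <= theta -> theta < delta -> theta <= alpha -> 0 < p ->
  exists2 K, 0 < K & forall r f t, e <= r ->
    damped_ode (1 + r `^ delta) (r `^ theta) (r `^ alpha) f -> 0 <= t ->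
    ode_energy (1 + r `^ delta) (r `^ alpha) f t
    <= K * (1 + t) `^ (- p) * r `^ ((delta - theta) * p)
       * ode_energy (1 + r `^ delta) (r `^ alpha) f 0.
Proof.
move=> e0 e1 t0 td ta p0; have d0 : 0 <= delta by lra.
have at0 : 0 <= alpha - theta by rewrite subr_ge0.
set m := e `^ (alpha - theta) / 2; have m0 : 0 < m by rewrite divr_gt0 ?powR_gt0.
have eat1 : e `^ (alpha - theta) <= 1 := powR_le1 at0 (ltW e0) e1.
have m_le : 2 * m <= 1 by rewrite /m; lra.
have ed : 0 < 1 + e `^ (- delta) by have := powR_ge0 e (- delta); lra.
set c := m / (1 + e `^ (- delta)) / 2; have c0 : 0 < c by rewrite /c divr_gt0 // divr_gt0.
have [K K0 decay] := expR_le_powR_decay c0 p0 (powR_gt0 (theta - delta) e0).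
exists (2 * K); first by rewrite mulr_gt0.
move=> r f t er ode t_ge0; have r0 := lt_le_trans e0 er.
have rD u v : r `^ (u + v) = r `^ u * r `^ v by rewrite powRD // (gt_eqF r0) implybT.
set a := 1 + r `^ delta; set b := r `^ theta; set k := r `^ alpha.
have rd0 : 0 < r `^ delta := powR_gt0 _ r0.
have a0 : 0 < a by rewrite /a; lra.
have b0 : 0 < b := powR_gt0 _ r0.
have ba : b <= a := powR_le_one_add_powR (ltW r0) t0 (ltW td).
set nu := m * b / a; have nu0 : 0 < nu by rewrite /nu divr_gt0 // mulr_gt0.
have nu_a : 2 * nu * a <= b.
  by rewrite /nu mulrA divfK ?gt_eqF //; have := ler_wpM2r (ltW b0) m_le; lra.
have nu_b : 2 * nu * b <= k.
  have ek := ge0_ler_powR_base at0 (ltW e0) er.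
  have mb : 2 * m * b <= r `^ (alpha - theta) * a.
    have -> : 2 * m = e `^ (alpha - theta) by rewrite /m; field.
    by have := powR_ge0 e (alpha - theta); nra.
  have -> : 2 * nu * b = 2 * m * b * (b / a) by rewrite /nu; field; rewrite gt_eqF.
  have -> : k = r `^ (alpha - theta) * a * (b / a).
    by rewrite /k /b -mulrA [a * _]mulrC divfK ?gt_eqF // -rD subrK.
  by rewrite ler_wpM2r // divr_ge0 // ltW.
have rate : c * r `^ (theta - delta) <= nu / 2.
  have bE : b = r `^ (theta - delta) * r `^ delta by rewrite /b -rD subrK.
  have -> : nu / 2 = m / 2 * r `^ (theta - delta) * (r `^ delta / a).
    by rewrite /nu bE; field; rewrite gt_eqF.
  have -> : c * r `^ (theta - delta) = m / 2 * r `^ (theta - delta) * (1 + e `^ (- delta))^-1.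
    by rewrite /c; field; rewrite gt_eqF.
  apply: ler_wpM2l; first by rewrite mulr_ge0 ?powR_ge0 // divr_ge0 // ltW.
  by rewrite ler_pdivlMr // ler_pdivrMl // one_add_powR_le.
have x_le : r `^ (theta - delta) <= e `^ (theta - delta).
  by apply: le0_ger_powR_base => //; lra.
have decay_r := decay _ _ (powR_gt0 (theta - delta) r0) x_le t_ge0.
rewrite -powRrM (_ : (theta - delta) * - p = (delta - theta) * p) in decay_r; last by ring.
have exp_le : expR (- (nu / 2 * t)) <= expR (- (c * r `^ (theta - delta) * t)).
  by rewrite ler_expR lerN2 ler_wpM2r.
apply: le_trans (ode_energy_decay a0 b0 (powR_gt0 alpha r0) nu0 nu_a nu_b ode t_ge0) _.
have E0 := ode_energy_ge0 f 0 (ltW a0) (powR_ge0 r alpha).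
rewrite [X in _ <= X](_ : _ = 2 * ode_energy a k f 0 *
  (K * (1 + t) `^ (- p) * r `^ ((delta - theta) * p))); last by ring.
by rewrite ler_wpM2l ?mulr_ge0 // (le_trans exp_le).
Qed.

End frequency_decay.

(* The contribution to [E1 t xi] of one real component [f] of [vhat], with
   [r = |xi|^2]; [data_density] is the matching integrand of the Sobolev norms
   of the data [(f 0, f' 0)]. *)
Definition energy_density (R : realType) (delta alpha sigma r : R) (f : R -> R) (t : R) : R :=
  2^-1 * r `^ (delta + sigma / 2) * derive1 f t ^+ 2
  + 2^-1 * r `^ (alpha + sigma / 2) * f t ^+ 2.

Definition data_density (R : realType) (s1 s0 r : R) (f : R -> R) : R :=
  (1 + r) `^ s1 * derive1 f 0 ^+ 2 + (1 + r) `^ s0 * f 0 ^+ 2.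

Section energy_density.
Variable R : realType.

Lemma energy_density_ge0 (delta alpha sigma r : R) f t :
  0 <= energy_density delta alpha sigma r f t.
Proof.
have h x y : 0 <= 2^-1 * r `^ x * y ^+ 2.
  by rewrite mulr_ge0 ?sqr_ge0 // mulr_ge0 ?powR_ge0 // invr_ge0.
by rewrite addr_ge0.
Qed.

Lemma energy_density_le (e delta alpha sigma q : R) : 0 < e -> 0 <= delta ->
  exists2 W, 0 < W & forall r f t Z, e <= r -> 0 <= Z ->
    ode_energy (1 + r `^ delta) (r `^ alpha) f t
      <= Z * r `^ q * ode_energy (1 + r `^ delta) (r `^ alpha) f 0 ->
    energy_density delta alpha sigma r f t
      <= W * Z * data_density (delta + q + sigma / 2) (alpha + q + sigma / 2) r f.
Proof.
move=> e0 d0; have [W W0 weight] := energy_weight_le alpha (q + sigma / 2) e0 d0.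
exists (W / 2); first by rewrite divr_gt0.
move=> r f t Z er Z0 decay; have r0 := lt_le_trans e0 er.
have rD u v : r `^ (u + v) = r `^ u * r `^ v by rewrite powRD // (gt_eqF r0) implybT.
have s0 : 0 <= r `^ (sigma / 2) := powR_ge0 _ _.
set E := ode_energy (1 + r `^ delta) (r `^ alpha) f in decay *.
apply: (le_trans (_ : _ <= 2^-1 * r `^ (sigma / 2) * E t)).
  rewrite /energy_density /E /ode_energy !rD.
  have : 0 <= r `^ (sigma / 2) * derive1 f t ^+ 2 by rewrite mulr_ge0 ?sqr_ge0.
  nra.
apply: (le_trans (_ : _ <= 2^-1 * Z * (r `^ (q + sigma / 2) * E 0))).
  rewrite (_ : 2^-1 * Z * _ = 2^-1 * r `^ (sigma / 2) * (Z * r `^ q * E 0)).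
    by rewrite ler_wpM2l // mulr_ge0.
  by rewrite rD; ring.
set D := data_density _ _ r f.
rewrite (_ : W / 2 * Z * D = 2^-1 * Z * (W * D)); last by ring.
rewrite ler_wpM2l ?mulr_ge0 ?invr_ge0 // /D /data_density /E /ode_energy -!addrA.
exact: weight (sqr_ge0 _) (sqr_ge0 _).
Qed.

Lemma energy_density_exp_decay (e delta alpha theta sigma : R) : 0 < e -> e <= 1 ->
  0 <= delta -> delta <= theta -> theta <= alpha ->
  exists2 c, 0 < c & exists2 C, 0 < C & forall r f t, e <= r ->
    damped_ode (1 + r `^ delta) (r `^ theta) (r `^ alpha) f -> 0 <= t ->
    energy_density delta alpha sigma r f t
      <= C * expR (- (c * t)) * data_density (delta + sigma / 2) (alpha + sigma / 2) r f.
Proof.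
move=> e0 e1 d0 dt ta; have [c c0 decay] := ode_energy_exp_decay e0 e1 d0 dt ta.
have [W W0 density] := energy_density_le alpha sigma 0 e0 d0.
exists c => //; exists (W * 2); first by rewrite mulr_gt0.
move=> r f t er ode t0.
have Z0 : 0 <= 2 * expR (- (c * t)) by rewrite mulr_ge0 ?expR_ge0.
have bound := density r f t _ er Z0; rewrite powRr0 mulr1 !addr0 in bound.
by apply: le_trans (bound (decay r f t er ode t0)) _; rewrite !mulrA.
Qed.

Lemma energy_density_poly_decay (e delta alpha theta sigma beta : R) : 0 < e -> e <= 1 ->
  0 <= theta -> theta < delta -> theta <= alpha -> 0 < beta ->
  exists2 C, 0 < C & forall r f t, e <= r ->
    damped_ode (1 + r `^ delta) (r `^ theta) (r `^ alpha) f -> 0 <= t ->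
    energy_density delta alpha sigma r f t
      <= C * (1 + t) `^ (- beta^-1) * data_density
           (delta + (delta - theta) / beta + sigma / 2)
           (alpha + (delta - theta) / beta + sigma / 2) r f.
Proof.
move=> e0 e1 t0 td ta b0; have d0 : 0 <= delta by lra.
have p0 : 0 < beta^-1 by rewrite invr_gt0.
have [K K0 decay] := ode_energy_poly_decay e0 e1 t0 td ta p0.
have [W W0 density] := energy_density_le alpha sigma ((delta - theta) / beta) e0 d0.
exists (W * K); first by rewrite mulr_gt0.
move=> r f t er ode t_ge0.
have Z0 : 0 <= K * (1 + t) `^ (- beta^-1) by rewrite mulr_ge0 ?powR_ge0 ?ltW.
apply: le_trans (density r f t _ er Z0 _) _; last by rewrite !mulrA.
exact: decay.
Qed.

End energy_density.

Section fourier_side.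
Variables (R : realType) (n : nat).
Implicit Types (xi : n.-tuple R).

Lemma enorm2_ge0 xi : 0 <= enorm2 xi.
Proof. by apply: sumr_ge0 => i _; exact: sqr_ge0. Qed.

Lemma sqrtr_powR2 (r y : R) : 0 <= r -> Num.sqrt r `^ (2 * y) = r `^ y.
Proof.
move=> r0; rewrite -powR12_sqrt // -powRrM; congr (_ `^ _).
by rewrite mulrA mulVf ?mul1r // pnatr_eq0.
Qed.

Lemma damped_ode_of_solves_ode (delta alpha theta : R) xi f (a b : R) :
  solves_ode delta alpha theta xi f a b ->
  [/\ damped_ode (1 + enorm2 xi `^ delta) (enorm2 xi `^ theta) (enorm2 xi `^ alpha) f,
      f 0 = a & derive1 f 0 = b].
Proof.
move=> [df [ddf [f0 [f'0 ode]]]]; split => //; split => // t.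
by have := ode t; rewrite /enorm !sqrtr_powR2 // enorm2_ge0.
Qed.

Lemma E1_energy_density (delta alpha sigma : R) (ure uim : R -> n.-tuple R -> R) t xi :
  E1 delta alpha sigma ure uim t xi =
  energy_density delta alpha sigma (enorm2 xi) (ure^~ xi) t
  + energy_density delta alpha sigma (enorm2 xi) (uim^~ xi) t.
Proof.
have h y : 2 * y + sigma = 2 * (y + sigma / 2) by field.
rewrite /E1 /energy_density /enorm !h !sqrtr_powR2 ?enorm2_ge0 //; ring.
Qed.

Lemma measurable_Hs_integrand (s : R) (fre fim : n.-tuple R -> R) :
  measurable_fun setT fre -> measurable_fun setT fim ->
  measurable_fun setT (fun xi => ((1 + enorm2 xi) `^ s * (fre xi ^+ 2 + fim xi ^+ 2))%:E).
Proof.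
move=> mre mim; apply/measurable_EFinP; apply: measurable_funM.
  apply: measurableT_comp (measurable_powR s) _; apply: measurable_funD => //.
  by apply: measurable_sum => i; apply: measurable_funX; exact: measurable_tnth.
by apply: measurable_funD; exact: measurable_funX.
Qed.

Lemma E1_high_le (delta alpha theta sigma eps s1 s0 M : R)
    (v0re v0im v1re v1im : n.-tuple R -> R) (ure uim : R -> n.-tuple R -> R) (t : R) :
  0 <= eps -> 0 <= M -> in_Hs s0 v0re v0im -> in_Hs s1 v1re v1im ->
  (forall xi, solves_ode delta alpha theta xi (ure^~ xi) (v0re xi) (v1re xi)) ->
  (forall xi, solves_ode delta alpha theta xi (uim^~ xi) (v0im xi) (v1im xi)) ->
  (forall r f, eps ^+ 2 <= r ->
     damped_ode (1 + r `^ delta) (r `^ theta) (r `^ alpha) f ->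
     energy_density delta alpha sigma r f t <= M * data_density s1 s0 r f) ->
  (E1_high delta alpha sigma eps ure uim t
   <= M%:E * (Hs_norm2 s1 v1re v1im + Hs_norm2 s0 v0re v0im))%E.
Proof.
move=> eps0 M0 [mv0re [mv0im _]] [mv1re [mv1im _]] sre sim bound.
have Hs_ge0 s (fre fim : n.-tuple R -> R) xi :
    (0 <= ((1 + enorm2 xi) `^ s * (fre xi ^+ 2 + fim xi ^+ 2))%:E)%E.
  by rewrite lee_fin mulr_ge0 ?powR_ge0 // addr_ge0 // sqr_ge0.
have m1 := measurable_Hs_integrand s1 mv1re mv1im.
have m0 := measurable_Hs_integrand s0 mv0re mv0im.
rewrite /Hs_norm2 -ge0_intRnD // -ge0_intRnZl ?lee_fin //; last 2 first.
- exact: emeasurable_funD.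
- by move=> xi; rewrite adde_ge0.
apply: ge0_le_intRn => xi.
  by case: ifP => // _; rewrite lee_fin E1_energy_density addr_ge0 ?energy_density_ge0.
case: ifP => [xi_eps|_]; last by apply: mule_ge0; [rewrite lee_fin | exact: adde_ge0].
have r_ge : eps ^+ 2 <= enorm2 xi.
  by rewrite -(sqr_sqrtr (enorm2_ge0 xi)) ler_sqr ?nnegrE ?sqrtr_ge0.
have [ode_re <- <-] := damped_ode_of_solves_ode (sre xi).
have [ode_im <- <-] := damped_ode_of_solves_ode (sim xi).
rewrite E1_energy_density -EFinD -EFinM lee_fin.
have := bound _ _ r_ge ode_re; have := bound _ _ r_ge ode_im.
rewrite /data_density; lra.
Qed.

End fourier_side.

Theorem proposition3p1 (R : realType) (n : nat) (delta alpha theta sigma eps : R) :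
  0 <= delta -> 0 <= alpha -> 0 <= theta -> theta <= alpha ->
  0 < eps -> eps < 1 ->
  (* (i) *)
  (delta <= theta ->
   exists c : R, 0 < c /\ exists C : R, 0 < C /\
   forall (v0re v0im v1re v1im : n.-tuple R -> R)
          (ure uim : R -> n.-tuple R -> R),
     in_Hs (alpha + sigma / 2) v0re v0im ->
     in_Hs (delta + sigma / 2) v1re v1im ->
     (forall xi, solves_ode delta alpha theta xi (fun t => ure t xi) (v0re xi) (v1re xi)) ->
     (forall xi, solves_ode delta alpha theta xi (fun t => uim t xi) (v0im xi) (v1im xi)) ->
     forall t : R, 0 <= t ->
       (E1_high delta alpha sigma eps ure uim t <=
        (C * expR (- (c * t)))%:E *
        (Hs_norm2 (delta + sigma / 2) v1re v1im
         + Hs_norm2 (alpha + sigma / 2) v0re v0im))%E)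
  /\
  (* (ii) *)
  (forall beta : R, 0 < beta -> theta < delta ->
   exists C : R, 0 < C /\
   forall (v0re v0im v1re v1im : n.-tuple R -> R)
          (ure uim : R -> n.-tuple R -> R),
     in_Hs (alpha + (delta - theta) / beta + sigma / 2) v0re v0im ->
     in_Hs (delta + (delta - theta) / beta + sigma / 2) v1re v1im ->
     (forall xi, solves_ode delta alpha theta xi (fun t => ure t xi) (v0re xi) (v1re xi)) ->
     (forall xi, solves_ode delta alpha theta xi (fun t => uim t xi) (v0im xi) (v1im xi)) ->
     forall t : R, 0 <= t ->
       (E1_high delta alpha sigma eps ure uim t <=
        (C * (1 + t) `^ (- beta^-1))%:E *
        (Hs_norm2 (delta + (delta - theta) / beta + sigma / 2) v1re v1im
         + Hs_norm2 (alpha + (delta - theta) / beta + sigma / 2) v0re v0im))%E).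
Proof.
move=> d0 a0 t0 ta eps0 eps1.
have e0 : 0 < eps ^+ 2 by rewrite exprn_gt0.
have e1 : eps ^+ 2 <= 1 by rewrite expr2; nra.
split=> [dt | beta b0 td].
- have [c c0 [C C0 bound]] := energy_density_exp_decay sigma e0 e1 d0 dt ta.
  exists c; split=> //; exists C; split=> // v0re v0im v1re v1im ure uim hv0 hv1 sre sim t t_ge0.
  apply: E1_high_le (ltW eps0) _ hv0 hv1 sre sim _ => [|r f er ode].
    by rewrite mulr_ge0 ?expR_ge0 // ltW.
  exact: bound.
- have [C C0 bound] := energy_density_poly_decay sigma e0 e1 t0 td ta b0.
  exists C; split=> // v0re v0im v1re v1im ure uim hv0 hv1 sre sim t t_ge0.
  apply: E1_high_le (ltW eps0) _ hv0 hv1 sre sim _ => [|r f er ode].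
    by rewrite mulr_ge0 ?powR_ge0 // ltW.
  exact: bound.
Qed.
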